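(* Let $\mu>0$, $c>0$, $m>0$, $\tilde\delta\in(0,1/2)$, $C\ge0$, $g\ge0$, and real numbers $F_k\ge F^\star\ge0$, with $\frac{g^2}{4c^2}+\frac{4\tilde\delta\mu F_k}{3m}>0$. Define $\lambda>0$ by $$2\lambda=\max\Big(\sqrt{\frac{4Cg^3}{\frac{1}{4c^2}g^2+\frac{4\tilde\delta\mu F_k}{3m}}}-\mu,\ \mu\Big),$$ and set $r=\frac{g}{2\lambda+\mu}$ and $\tilde\epsilon=\tilde\delta\frac{\mu}{2\lambda+\mu}$. Then $$4Cr^3-\frac{\lambda}{c^2}r^2\le\frac{2\lambda}{2\lambda+\mu}\cdot\frac{4\tilde\epsilon}{m}(F_k-F^\star)+4\tilde\epsilon\Big(1+\frac1m\Big)F^\star.$$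
   Context: In the paper's application, $g=\|\nabla F(x_k)\|_2$, $F_k=F(x_k)$, $F^\star=\min F$, $C$ bounds the cubic Taylor remainder, and $\lambda=\lambda_{k+1}$, $r=r_{k+1}$, $\tilde\epsilon=\tilde\epsilon_{k+1}$; the claim is a purely real-number inequality. *)

From Stdlib Require Import Reals Lra.

(* Multiplying by L^3, where L = 2 lam + mu, clears all denominators.  Since
   L >= sqrt (4 C g^3 / D), the cubic term is at most L^2 D, and D splits into
   the curvature part g^2 / (4 c^2), absorbed by the quadratic term because
   L <= 2 (2 lam), and the part proportional to Fk, whose share Fk - Fstar is
   absorbed by the first summand because L <= 3 (2 lam). *)
From Stdlib Require Import Reals Lra Psatz.
Open Scope R_scope.

Lemma le_sqr_mul_of_sqrt_div_le (x D L : R) :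
  0 <= x -> 0 < D -> sqrt (x / D) <= L -> x <= L ^ 2 * D.
Proof.
  intros Hx HD HsL.
  assert (Hdiv : 0 <= x / D) by (apply Rle_mult_inv_pos; lra).
  assert (Hsq : x / D <= L ^ 2).
  { rewrite <- (sqrt_sqrt (x / D)) by exact Hdiv.
    pose proof (sqrt_pos (x / D)). nra. }
  apply (Rmult_le_compat_r D) in Hsq; [|lra].
  replace (x / D * D) with x in Hsq by (field; lra).
  exact Hsq.
Qed.

Lemma cubic_remainder_budget (a k M L x Fk Fs : R) :
  0 <= a -> 0 <= k -> 0 <= Fs -> Fs <= Fk -> 0 < L -> L <= 2 * M ->
  x <= L ^ 2 * (a + k * Fk / 3) ->
  x - 2 * M * L * a <= M * L * k * (Fk - Fs) + L ^ 2 * k * Fs.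
Proof.
  intros Ha Hk HFs HF HL HLM Hx.
  assert (Hgap : 0 <= k * (Fk - Fs)) by (apply Rmult_le_pos; lra).
  assert (Hcurv : 0 <= (2 * M - L) * (L * a))
    by (apply Rmult_le_pos; [lra | apply Rmult_le_pos; lra]).
  assert (Hshare : 0 <= (3 * M - L) * (L * (k * (Fk - Fs))))
    by (apply Rmult_le_pos; [lra | apply Rmult_le_pos; lra]).
  assert (Hopt : 0 <= L ^ 2 * (k * Fs)) by (apply Rmult_le_pos; [apply pow_le | apply Rmult_le_pos]; lra).
  nra.
Qed.

Theorem mainTheorem11 (mu c m dt C g Fk Fstar : R) :
  0 < mu -> 0 < c -> 0 < m -> 0 < dt -> dt < 1/2 -> 0 <= C -> 0 <= g ->
  Fstar <= Fk -> 0 <= Fstar ->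
  0 < g^2 / (4 * c^2) + 4 * dt * mu * Fk / (3 * m) ->
  let lam := Rmax (sqrt (4 * C * g^3 / (g^2 / (4 * c^2) + 4 * dt * mu * Fk / (3 * m))) - mu) mu / 2 in
  let r := g / (2 * lam + mu) in
  let eps := dt * (mu / (2 * lam + mu)) in
  4 * C * r^3 - lam / c^2 * r^2 <=
    (2 * lam / (2 * lam + mu)) * (4 * eps / m) * (Fk - Fstar)
    + 4 * eps * (1 + 1 / m) * Fstar.
Proof.
  intros Hmu Hc Hm Hdt _ HC Hg HF HFs HD lam r eps.
  set (a := g ^ 2 / (4 * c ^ 2)) in *.
  set (k := 4 * dt * mu / m).
  set (L := 2 * lam + mu).
  set (S := sqrt (4 * C * g ^ 3 / (a + 4 * dt * mu * Fk / (3 * m)))) in lam.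
  assert (Hlam : 2 * lam = Rmax (S - mu) mu) by (unfold lam; field).
  assert (HSL : S <= L) by (pose proof (Rmax_l (S - mu) mu); unfold L; lra).
  assert (Hmu_lam : mu <= 2 * lam) by (rewrite Hlam; apply Rmax_r).
  assert (HL : 0 < L) by (unfold L; lra).
  assert (Hcubic : 4 * C * g ^ 3 <= L ^ 2 * (a + k * Fk / 3)).
  { replace (a + k * Fk / 3) with (a + 4 * dt * mu * Fk / (3 * m)) by (unfold k; field; lra).
    apply le_sqr_mul_of_sqrt_div_le; [| lra | exact HSL].
    apply Rmult_le_pos; [lra | apply pow_le; lra]. }
  apply (Rmult_le_reg_r (L ^ 3)); [apply pow_lt; lra |].
  unfold r, eps; fold L.
  replace ((4 * C * (g / L) ^ 3 - lam / c ^ 2 * (g / L) ^ 2) * L ^ 3)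
    with (4 * C * g ^ 3 - 2 * (2 * lam) * L * a) by (unfold a; field; lra).
  replace ((2 * lam / L * (4 * (dt * (mu / L)) / m) * (Fk - Fstar)
            + 4 * (dt * (mu / L)) * (1 + 1 / m) * Fstar) * L ^ 3)
    with (2 * lam * L * k * (Fk - Fstar) + L ^ 2 * k * Fstar + 4 * dt * mu * L ^ 2 * Fstar)
    by (unfold k; field; lra).
  assert (Hslack : 0 <= 4 * dt * mu * L ^ 2 * Fstar)
    by (repeat apply Rmult_le_pos; try lra; apply pow_le; lra).
  assert (Ha : 0 <= a) by (unfold a; apply Rle_mult_inv_pos; nra).
  assert (Hk : 0 <= k) by (unfold k; apply Rle_mult_inv_pos; nra).
  assert (HLM : L <= 2 * (2 * lam)) by (unfold L; lra).
  pose proof (cubic_remainder_budget a k (2 * lam) L (4 * C * g ^ 3) Fk Fstar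
                Ha Hk HFs HF HL HLM Hcubic).
  lra.
Qed.
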